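(* Let $V\subseteq\mathbb N$ with $|V|\ge 2$, and let $\mathrm{Adm}(V)$ be the set of admissible binary trees with root $V$. Then the map $\mathcal E$ sending $T\in\mathrm{Adm}(V)$ to the edge set $\{\{\min X,\max X\}: X \text{ a node of } T\}$ is a bijection from $\mathrm{Adm}(V)$ onto the set of facets of $\Delta_V$. (Its inverse sends a facet $F$ to its decomposition tree, obtained by recursively applying the decomposition $F=F^1\sqcup F^2\sqcup\{\{\min V,\max V\}\}$ of facets into facets $F^1$ of $\Delta_{V(F^1)}$ and $F^2$ of $\Delta_{V(F^2)}$ with $V(F^1)\cup V(F^2)=V$, $V(F^1)\cap V(F^2)=\{\max V(F^1)\}$, $\min V\in V(F^1)$, $\max V\in V(F^2)$.)
   Context: A path $(v_1,\dots,v_k)$ in an edge set is a sequence of distinct vertices with consecutive ones joined by edges; it is forbidden if $k\ge 4$, $v_1=\max(v_1,\dots,v_k)$, $v_k=\max(v_2,\dots,v_k)$, $v_2>v_{k-1}$. For finite $V\subseteq\mathbb N$, $\Delta_V$ is the simplicial complex on $E(K_V)$ whose faces are edge sets containing no forbidden path. A binary tree is a rooted planar tree in which every node has either zero or two (ordered) children; for a non-leaf node $X$ write $X^{(1)}$ for its older and $X^{(2)}$ for its younger child. An admissible binary tree with root $V$ is a binary tree whose nodes are labeled by subsets of $V$, with root labeled $V$, such that every node $X$ has $|X|\ge 2$, the leaves are exactly the nodes with $|X|=2$, and every non-leaf node $X$ satisfies: (a) $\min X\in X^{(1)}\setminus X^{(2)}$; (b) $\max X\in X^{(2)}\setminus X^{(1)}$;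 (c) $X^{(1)}\cup X^{(2)}=X$; (d) $X^{(1)}\cap X^{(2)}=\{\max X^{(1)}\}$. *)

From mathcomp Require Import all_boot all_order.
From mathcomp Require Import finmap.
Set Implicit Arguments. Unset Strict Implicit. Unset Printing Implicit Defensive.
Local Open Scope fset_scope.

(* Maximum / minimum of a finite set of naturals (meaningful for nonempty X). *)
Definition fmax (X : {fset nat}) : nat := \max_(x <- X) x.
Definition fmin (X : {fset nat}) : nat := \big[minn/fmax X]_(x <- X) x.

(* An edge {a,b} (a <> b) is represented as the ordered pair (min, max). *)
Definition edge_of (a b : nat) : nat * nat := (minn a b, maxn a b).

Definition is_path (F : {fset nat * nat}) (p : seq nat) : bool :=
  uniq p && (if p is x :: s then path (fun a b => edge_of a b \in F) x s else true).

(* Forbidden path: k >= 4, v_1 = max(v_1..v_k), v_k = max(v_2..v_k),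
   v_2 > v_{k-1}. *)
Definition forbidden (F : {fset nat * nat}) (p : seq nat) : Prop :=
  is_path F p /\ 4 <= size p /\
  nth 0 p 0 = \max_(x <- p) x /\
  nth 0 p (size p).-1 = \max_(x <- behead p) x /\
  nth 0 p (size p).-2 < nth 0 p 1.

Definition edges_of_KV (V : {fset nat}) (F : {fset nat * nat}) : Prop :=
  forall e, e \in F -> [/\ e.1 < e.2, e.1 \in V & e.2 \in V].

Definition face (V : {fset nat}) (F : {fset nat * nat}) : Prop :=
  edges_of_KV V F /\ forall p, ~ forbidden F p.

Definition facet (V : {fset nat}) (F : {fset nat * nat}) : Prop :=
  face V F /\ forall G, face V G -> F `<=` G -> G = F.

(* Binary trees (every node has 0 or 2 ordered children), labelled by
   finite sets of naturals.  In [Node X t1 t2], t1 is the older child X^(1)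
   and t2 the younger child X^(2). *)
Inductive btree : Type :=
| Leaf : {fset nat} -> btree
| Node : {fset nat} -> btree -> btree -> btree.

Definition label (t : btree) : {fset nat} :=
  match t with Leaf X => X | Node X _ _ => X end.

Fixpoint nodes (t : btree) : seq {fset nat} :=
  match t with
  | Leaf X => [:: X]
  | Node X t1 t2 => X :: nodes t1 ++ nodes t2
  end.

Fixpoint adm_nodes (t : btree) : Prop :=
  match t with
  | Leaf X => #|` X| = 2
  | Node X t1 t2 =>
      let X1 := label t1 in let X2 := label t2 in
      (2 <= #|` X|) /\ (#|` X| <> 2) /\
      (fmin X \in X1) /\ (fmin X \notin X2) /\
      (fmax X \in X2) /\ (fmax X \notin X1) /\
      (X1 `|` X2 = X) /\
      (X1 `&` X2 = [fset fmax X1]) /\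
      adm_nodes t1 /\ adm_nodes t2
  end.

Definition admissible (V : {fset nat}) (t : btree) : Prop :=
  label t = V /\ (forall X, X \in nodes t -> X `<=` V) /\ adm_nodes t.

Definition edgeset (t : btree) : {fset nat * nat} :=
  [fset (fmin X, fmax X) | X in nodes t].

From mathcomp Require Import all_boot all_order.
From mathcomp Require Import finmap.
From mathcomp Require Import zify.
From mathcomp Require Import boolp.
Set Implicit Arguments. Unset Strict Implicit. Unset Printing Implicit Defensive.
Local Open Scope fset_scope.

(* A forbidden path of E(T) never uses the root edge {min V, max V}: max V could
   only be its first vertex, and then its second vertex would be min V, which is
   not larger than the last but one.  The two children of a node meet only in
   max X^(1), the largest vertex on the older side, so such a path cannot pass
   from one child to the other either; hence E(T) is a face, with 2|V| - 3 edges.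
   Conversely, for a face G let m be the largest neighbour of min V other than
   max V and R the set of vertices joined to min V through vertices below m.  If
   some w in R other than min V had a neighbour u above m, then u, w, ..., min V, m
   would be forbidden; so every edge of G other than {min V, max V} lies inside
   m |` R or inside V \ R, which split V as the children of an admissible node.
   By induction G lies in some E(T), and counting edges shows that the facets are
   exactly the sets E(T).  Finally T is recovered from E(T): the maximum of the
   older child of the root is the largest neighbour of min V other than max V,
   and the rest of that child is connected to min V by edges of E(T) below it. *)


Lemma bigmax_mem (s : seq nat) : s != [::] -> \max_(x <- s) x \in s.
Proof.
elim: s => // x [|y s] IH _; first by rewrite big_seq1 mem_head.
rewrite big_cons; case: leqP => _; last exact: mem_head.
by rewrite inE IH ?orbT.
Qed.

Lemma bigmin_mem (s : seq nat) d : \big[minn/d]_(y <- s) y \in d :: s.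
Proof.
elim: s => [|x s IH]; first by rewrite big_nil mem_head.
rewrite big_cons; case: leqP => _; first by rewrite !inE eqxx orbT.
by move: IH; rewrite !inE => /orP[->|->]; rewrite ?orbT.
Qed.

Lemma geq_bigmin_seq (s : seq nat) d x : x \in s -> \big[minn/d]_(y <- s) y <= x.
Proof.
elim: s => // y s IH; rewrite inE big_cons => /orP[/eqP->|xs].
  exact: geq_minl.
exact: leq_trans (geq_minr _ _) (IH xs).
Qed.

Lemma leq_fmax X x : x \in X -> x <= fmax X.
Proof. by move=> xX; apply: (leq_bigmax_seq x). Qed.

Lemma fmax_mem X x : x \in X -> fmax X \in X.
Proof.
move=> xX; apply: bigmax_mem; move: xX.
by rewrite -[x \in X]/(x \in (X : seq nat)); case: (X : seq nat).
Qed.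

Lemma fmax_eq X u : u \in X -> (forall x, x \in X -> x <= u) -> fmax X = u.
Proof.
move=> uX le_u; apply/eqP; rewrite eqn_leq leq_fmax // andbT.
by apply/bigmax_leqP_seq => x xX _; apply: le_u.
Qed.

Lemma geq_fmin X x : x \in X -> fmin X <= x.
Proof. exact: geq_bigmin_seq. Qed.

Lemma fmin_mem X x : x \in X -> fmin X \in X.
Proof.
move=> xX; have := bigmin_mem X (fmax X); rewrite -/(fmin X).
by rewrite inE => /orP[/eqP->|//]; exact: fmax_mem xX.
Qed.

Lemma fmin_eq X u : u \in X -> (forall x, x \in X -> u <= x) -> fmin X = u.
Proof.
move=> uX ge_u; apply/eqP; rewrite eqn_leq geq_fmin //=.
exact/ge_u/(fmin_mem uX).
Qed.

Lemma card_gt1_other (X : {fset nat}) y : 1 < #|` X| -> exists2 x, x \in X & x != y.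
Proof.
move=> X_gt1; case: (boolP (X `<=` [fset y])) => [sub|/fsubsetPn[x xX]].
  by have := fsubset_leq_card sub; rewrite cardfs1; lia.
by rewrite inE => ?; exists x.
Qed.

Lemma card_gt1 (X : {fset nat}) x y : x \in X -> y \in X -> x != y -> 1 < #|` X|.
Proof.
move=> xX yX xy; have sub : [fset x; y] `<=` X.
  by apply/fsubsetP => z; rewrite !inE => /orP[]/eqP->.
by have := fsubset_leq_card sub; rewrite cardfs2 xy.
Qed.

Lemma fmin_lt_fmax X : 1 < #|` X| -> fmin X < fmax X.
Proof.
move=> X_gt1; have [x xX x_neq] := card_gt1_other (fmin X) X_gt1.
have := geq_fmin xX; have := leq_fmax xX; lia.
Qed.

Lemma card2_fminmax (X : {fset nat}) : #|` X| = 2 -> X = [fset fmin X; fmax X].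
Proof.
move=> X2; have lt := fmin_lt_fmax (eq_leq (esym X2)).
have [x xX _] := card_gt1_other 0 (eq_leq (esym X2)).
apply/eqP; rewrite eq_sym eqEfcard cardfs2 X2 neq_ltn lt /=.
apply/andP; split=> //; apply/fsubsetP => z.
by rewrite !inE => /orP[]/eqP->; [exact: fmin_mem xX|exact: fmax_mem xX].
Qed.

Lemma card2_mem X x : #|` X| = 2 -> x \in X -> (x == fmin X) || (x == fmax X).
Proof. by move=> /card2_fminmax X2; rewrite {1}X2 !inE. Qed.

(** * Admissible trees *)

Record splitting (X X1 X2 : {fset nat}) : Prop := Splitting {
  split_fmin1 : fmin X \in X1;
  split_fmin2 : fmin X \notin X2;
  split_fmax2 : fmax X \in X2;
  split_fmax1 : fmax X \notin X1;
  splitU : X1 `|` X2 = X;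
  splitI : X1 `&` X2 = [fset fmax X1] }.

Section Splitting.
Variables (X X1 X2 : {fset nat}).
Hypothesis sp : splitting X X1 X2.

Lemma split_sub1 : {subset X1 <= X}.
Proof. by move=> x x1; rewrite -(splitU sp) inE x1. Qed.

Lemma split_sub2 : {subset X2 <= X}.
Proof. by move=> x x2; rewrite -(splitU sp) inE x2 orbT. Qed.

Lemma split_cover x : x \in X -> (x \in X1) || (x \in X2).
Proof. by rewrite -(splitU sp) inE. Qed.

Lemma split_inter x : x \in X1 -> x \in X2 -> x = fmax X1.
Proof. by move=> x1 x2; apply/fset1P; rewrite -(splitI sp) inE x1 x2. Qed.

Lemma fmax1_in1 : fmax X1 \in X1.
Proof. exact: fmax_mem (split_fmin1 sp). Qed.

Lemma fmax1_in2 : fmax X1 \in X2.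
Proof. by have := fset11 (fmax X1); rewrite -(splitI sp) inE => /andP[]. Qed.

Lemma fmin_split1 : fmin X1 = fmin X.
Proof. by apply: fmin_eq (split_fmin1 sp) _ => x /split_sub1; apply: geq_fmin. Qed.

Lemma fmax_split2 : fmax X2 = fmax X.
Proof. by apply: fmax_eq (split_fmax2 sp) _ => x /split_sub2; apply: leq_fmax. Qed.

Lemma fmin_lt_fmax1 : fmin X < fmax X1.
Proof.
rewrite ltn_neqAle geq_fmin ?andbT ?(split_sub1 fmax1_in1) //.
by apply: contraNneq (split_fmin2 sp) => ->; exact: fmax1_in2.
Qed.

Lemma fmax1_lt_fmax : fmax X1 < fmax X.
Proof.
rewrite ltn_neqAle leq_fmax ?andbT ?(split_sub1 fmax1_in1) //.
by apply: contraNneq (split_fmax1 sp) => <-; exact: fmax1_in1.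
Qed.

Lemma split_label2 : X2 = fmax X1 |` (X `\` X1).
Proof.
apply/fsetP => x; rewrite !inE; apply/idP/idP => [x2|/orP[/eqP->|/andP[]]].
- case: (boolP (x \in X1)) => x1; last by rewrite (split_sub2 x2) orbT.
  by rewrite (split_inter x1 x2) eqxx.
- exact: fmax1_in2.
- by move=> x1 /split_cover; rewrite (negbTE x1).
Qed.

Lemma split_card1 : 1 < #|` X1| < #|` X|.
Proof.
rewrite (card_gt1 (split_fmin1 sp) fmax1_in1) ?neq_ltn ?fmin_lt_fmax1 //=.
rewrite -(splitU sp); apply/fproper_ltn_card/fproperUl/fsubsetPn.
by exists (fmax X); [exact: split_fmax2 sp|exact: split_fmax1 sp].
Qed.

Lemma split_card2 : 1 < #|` X2| < #|` X|.
Proof.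
rewrite (card_gt1 fmax1_in2 (split_fmax2 sp)) ?neq_ltn ?fmax1_lt_fmax //=.
rewrite -(splitU sp); apply/fproper_ltn_card/fproperUr/fsubsetPn.
by exists (fmin X); [exact: split_fmin1 sp|exact: split_fmin2 sp].
Qed.

End Splitting.

Lemma adm_nodeP X t1 t2 : adm_nodes (Node X t1 t2) <->
  [/\ 2 < #|` X|, splitting X (label t1) (label t2), adm_nodes t1 & adm_nodes t2].
Proof.
rewrite /=; split=> [[X_ge2 [X_neq2 [? [? [? [? [? [? [? ?]]]]]]]]]|[X_gt2 [? ? ? ? ? ?] ? ?]].
  by split=> //; lia.
by split; [lia|split; [lia|do !split]].
Qed.

Lemma in_edgeset t e :
  reflect (exists2 X, X \in nodes t & e = (fmin X, fmax X)) (e \in edgeset t).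
Proof. by apply: (iffP idP) => [/imfsetP[X XX ->]|[X XX ->]]; last apply/imfsetP; exists X. Qed.

Lemma edgeset_leaf X : edgeset (Leaf X) = [fset (fmin X, fmax X)].
Proof.
apply/fsetP => e; apply/in_edgeset/fset1P => [[Y /[!inE]/eqP->]//|->].
by exists X; rewrite ?inE.
Qed.

Lemma edgeset_node X t1 t2 :
  edgeset (Node X t1 t2) = (fmin X, fmax X) |` (edgeset t1 `|` edgeset t2).
Proof.
apply/fsetP => e; rewrite !inE; apply/in_edgeset/idP => [[Y]|].
  rewrite /= inE mem_cat => /orP[/eqP-> ->|/orP[] YY ->]; first by rewrite eqxx.
    by apply/or3P/Or32/in_edgeset; exists Y.
  by apply/or3P/Or33/in_edgeset; exists Y.
case/or3P => [/eqP->|/in_edgeset[Y YY ->]|/in_edgeset[Y YY ->]].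
- by exists X; rewrite //= inE eqxx.
- by exists Y; rewrite //= inE mem_cat YY orbT.
- by exists Y; rewrite //= inE mem_cat YY !orbT.
Qed.

Lemma label_in_nodes t : label t \in nodes t.
Proof. by case: t => [X|X t1 t2] /=; rewrite inE eqxx. Qed.

Lemma root_in_edgeset t : (fmin (label t), fmax (label t)) \in edgeset t.
Proof. by apply/in_edgeset; exists (label t) => //; exact: label_in_nodes. Qed.

Lemma adm_nodes_label t : adm_nodes t ->
  forall Y, Y \in nodes t -> 2 <= #|` Y| /\ Y `<=` label t.
Proof.
elim: t => [X|X t1 IH1 t2 IH2] /=; first by move=> X2 Y /[!inE]/eqP->; rewrite X2.
case/adm_nodeP => X_gt2 sp adm1 adm2 Y; rewrite inE mem_cat => /or3P[/eqP->|Y1|Y2].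
- by rewrite ltnW.
- have [? sub] := IH1 adm1 Y Y1; split=> //.
  by apply: fsubset_trans sub _; apply/fsubsetP => x /(split_sub1 sp).
- have [? sub] := IH2 adm2 Y Y2; split=> //.
  by apply: fsubset_trans sub _; apply/fsubsetP => x /(split_sub2 sp).
Qed.

Lemma admissibleE V t : admissible V t <-> label t = V /\ adm_nodes t.
Proof.
split=> [[? [_ ?]]|[<- adm]] //; do 2!split=> //.
by move=> Y /(adm_nodes_label adm)[].
Qed.

Lemma adm_card t : adm_nodes t -> 2 <= #|` label t|.
Proof. by move=> adm; have [] := adm_nodes_label adm (label_in_nodes t). Qed.

Lemma adm_edges t : adm_nodes t -> edges_of_KV (label t) (edgeset t).
Proof.
move=> adm e /in_edgeset[Y YY ->] /=.
have [Y_ge2 /fsubsetP sub] := adm_nodes_label adm YY.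
have [y yY _] := card_gt1_other 0 Y_ge2.
by split; [exact: fmin_lt_fmax|exact/sub/(fmin_mem yY)|exact/sub/(fmax_mem yY)].
Qed.

Lemma card_edgeset t : adm_nodes t -> #|` edgeset t| = (2 * #|` label t| - 3)%N.
Proof.
elim: t => [X /= X2|X t1 IH1 t2 IH2 /adm_nodeP[_ sp adm1 adm2]].
  by rewrite edgeset_leaf cardfs1 X2.
have kv1 := adm_edges adm1; have kv2 := adm_edges adm2.
have root_new : (fmin X, fmax X) \notin edgeset t1 `|` edgeset t2.
  rewrite inE; apply/norP; split; apply/negP.
    by case/kv1 => _ _ /=; rewrite (negbTE (split_fmax1 sp)).
  by case/kv2 => _ /=; rewrite (negbTE (split_fmin2 sp)).
have disj : edgeset t1 `&` edgeset t2 = fset0.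
  apply/fsetP => e; rewrite !inE; apply/negP => /andP[/kv1[lt a1 b1] /kv2[_ a2 b2]].
  by move: lt; rewrite (split_inter sp a1 a2) (split_inter sp b1 b2) ltnn.
rewrite edgeset_node cardfsU1 root_new cardfsU disj cardfs0 (IH1 adm1) (IH2 adm2).
have := cardfsUI (label t1) (label t2); rewrite (splitU sp) (splitI sp) cardfs1.
by have := adm_card adm1; have := adm_card adm2; rewrite /=; lia.
Qed.

(** * Forbidden paths *)

Definition adj (F : {fset nat * nat}) (x y : nat) : bool := edge_of x y \in F.

Lemma edge_ofC x y : edge_of x y = edge_of y x.
Proof. by rewrite /edge_of minnC maxnC. Qed.

Lemma adjC F x y : adj F x y = adj F y x.
Proof. by rewrite /adj edge_ofC. Qed.

Lemma adjU F G x y : adj (F `|` G) x y = adj F x y || adj G x y.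
Proof. by rewrite /adj inE. Qed.

Lemma adjD1 F e x y : adj (F `\ e) x y = (edge_of x y != e) && adj F x y.
Proof. by rewrite /adj in_fsetD1. Qed.

Lemma adj_edges V F x y : edges_of_KV V F -> adj F x y -> x \in V /\ y \in V.
Proof. by move=> kv /kv[_]; rewrite /edge_of /minn /maxn /=; case: ltnP. Qed.

Lemma edge_of_le x y : x <= y -> edge_of x y = (x, y).
Proof. by move=> le; rewrite /edge_of (minn_idPl le) (maxn_idPr le). Qed.

Lemma bigmax_eq_iff (s : seq nat) u :
  u \in s -> u = \max_(x <- s) x <-> {in s, forall x, x <= u}.
Proof.
move=> us; split=> [-> x xs|le_u]; first exact: leq_bigmax_seq.
apply/eqP; rewrite eqn_leq leq_bigmax_seq //=.
by apply/bigmax_leqP_seq => x xs _; exact: le_u.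
Qed.

Lemma forbidden_shape F p : forbidden F p -> exists v1 v2 r vk, p = v1 :: v2 :: rcons r vk.
Proof.
case=> _ [+ _]; case: p => [|v1 [|v2 s]] //= size_s.
by case/lastP: s size_s => [|r vk] //; exists v1, v2, r, vk.
Qed.

Lemma forbiddenE F v1 v2 r vk : let p := v1 :: v2 :: rcons r vk in
  forbidden F p <-> [/\ is_path F p, r != [::], {in p, forall x, x <= v1},
                        {in v2 :: r, forall x, x <= vk} & last v2 r < v2].
Proof.
have nth_last_but1 : nth 0 (v1 :: v2 :: rcons r vk) (size r).+1 = last v2 r.
  by rewrite /= -rcons_cons nth_rcons /= ltnS leqnn (nth_last 0 (v2 :: r)).
rewrite /forbidden /= size_rcons !ltnS lt0n size_eq0 nth_last_but1.
have vk_tail : vk \in rcons (v2 :: r) vk by rewrite mem_rcons mem_head.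
rewrite -rcons_cons nth_rcons /= ltnn eqxx (bigmax_eq_iff (mem_head _ _)).
rewrite (bigmax_eq_iff vk_tail).
have tail_iff : {in rcons (v2 :: r) vk, forall x, x <= vk} <-> {in v2 :: r, forall x, x <= vk}.
  split=> le_vk x; first by move=> xr; apply: le_vk; rewrite mem_rcons inE xr orbT.
  by rewrite mem_rcons inE => /orP[/eqP->|/le_vk].
rewrite tail_iff; split=> [[? [? [? [? ?]]]]|[? ? ? ? ?]]; by [split|do !split].
Qed.

Lemma forbidden_path F G x s : forbidden F (x :: s) -> path (adj G) x s -> forbidden G (x :: s).
Proof. by case=> /andP[U _] rest P; split=> //; rewrite /is_path U. Qed.

Lemma forbidden_subset F G p : F `<=` G -> forbidden F p -> forbidden G p.
Proof.
case: p => [|x s] sub fb; first by case: fb => _ [].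
apply: (forbidden_path fb); case: fb => /andP[_] P _.
by apply: sub_path P => y z; exact: (fsubsetP sub).
Qed.

Lemma path_adj_mem V F x s : edges_of_KV V F -> path (adj F) x s -> s != [::] ->
  {subset x :: s <= V}.
Proof.
move=> kv; elim: s x => // y s IH x /= /andP[/(adj_edges kv)[xV yV] P] _ z.
rewrite inE => /orP[/eqP->//|]; case: s IH P => [|w s] IH P; first by rewrite inE => /eqP->.
exact: IH.
Qed.

Lemma forbidden_fsetD1 V F p : edges_of_KV V F -> forbidden F p ->
  forbidden (F `\ (fmin V, fmax V)) p.
Proof.
move=> kv fb; have [v1 [v2 [r [vk Ep]]]] := forbidden_shape fb; subst p.
move/forbiddenE: (fb) => [/andP[U P] _ le_v1 _ lt2].
apply: (forbidden_path fb); have inV := path_adj_mem kv P isT.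
have tail_b : fmax V \notin v2 :: rcons r vk.
  apply: contraTN U => b_tail; suff -> : v1 = fmax V by rewrite cons_uniq b_tail.
  by apply/eqP; rewrite eqn_leq leq_fmax ?inV ?mem_head // le_v1 // inE b_tail orbT.
have v2_a : v2 != fmin V.
  have a_le : fmin V <= last v2 r.
    apply/geq_fmin/inV; have := mem_last v2 r.
    by rewrite !inE mem_rcons inE => /orP[->|->]; rewrite ?orbT.
  by rewrite neq_ltn (leq_ltn_trans a_le lt2) orbT.
have {}P : path (adj F) v1 (v2 :: rcons r vk) := P.
move: P => /= /andP[e12 P]; apply/andP; split.
  rewrite adjD1 e12 andbT edge_ofC edge_of_le ?le_v1 ?inE ?eqxx ?orbT //.
  by apply: contraNneq v2_a => -[->].
apply: (sub_in_path (P := fun z => z != fmax V)); last exact: P.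
  move=> x y xb yb /= exy; rewrite adjD1 exy andbT.
  apply: contraNneq (yb) => /(congr1 snd) /=.
  by rewrite /maxn; case: ltnP => _ E; [rewrite E|move: xb; rewrite -topredE /= E eqxx].
by apply/allP => z z_tail; apply: contraNneq tail_b => <-.
Qed.

Lemma path_fsetU_stay E1 E2 X1 X2 m x s :
  edges_of_KV X1 E1 -> edges_of_KV X2 E2 -> (forall y, y \in X1 -> y \in X2 -> y = m) ->
  x \in X1 -> m \notin belast x s -> path (adj (E1 `|` E2)) x s ->
  path (adj E1) x s && all [in X1] s.
Proof.
move=> kv1 kv2 X12; elim: s x => // y s IH x x1 /=.
rewrite inE negb_or => /andP[x_m m_s] /andP[/[!adjU]/orP[e1|e2] P].
  by have [_ y1] := adj_edges kv1 e1; rewrite e1 y1 IH.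
by have [x2 _] := adj_edges kv2 e2; rewrite (X12 x x1 x2) eqxx in x_m.
Qed.

Section PathInUnion.
Variables (E1 E2 : {fset nat * nat}) (X1 X2 : {fset nat}) (m : nat).
Hypotheses (kv1 : edges_of_KV X1 E1) (kv2 : edges_of_KV X2 E2).
Hypothesis X12 : forall x, x \in X1 -> x \in X2 -> x = m.

Lemma path_fsetU_side x s : s != [::] -> m \notin behead (belast x s) ->
  path (adj (E1 `|` E2)) x s ->
  (path (adj E1) x s && all [in X1] (x :: s)) || (path (adj E2) x s && all [in X2] (x :: s)).
Proof.
case: s => // y s _ /= m_s /andP[/[!adjU]/orP[e1|e2] P].
  have [x1 y1] := adj_edges kv1 e1.
  by have /andP[-> ->] := path_fsetU_stay kv1 kv2 X12 y1 m_s P; rewrite e1 x1 y1.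
have X21 z : z \in X2 -> z \in X1 -> z = m by move=> z2 z1; exact: X12.
have [x2 y2] := adj_edges kv2 e2; rewrite fsetUC in P.
have /andP[-> ->] := path_fsetU_stay kv2 kv1 X21 y2 m_s P.
by rewrite e2 x2 y2 orbT.
Qed.

Hypothesis le_m : forall x, x \in X1 -> x <= m.

Lemma path_fsetU_peaks x s : uniq (x :: s) -> s != [::] -> path (adj (E1 `|` E2)) x s ->
  {in x :: s, forall z, z <= x} -> {in s, forall z, z <= last x s} ->
  path (adj E1) x s \/ path (adj E2) x s.
Proof.
move=> U s_ne P le_x le_last; case: (boolP (m \in s)) => [ms|m_s]; last first.
  have m_in : m \notin behead (belast x s).
    by apply: contra m_s; case: s {U P le_x le_last s_ne} => //= y s /mem_belast.
  by case/orP: (path_fsetU_side s_ne m_in P) => /andP[? _]; [left|right].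
case/splitPr: ms U P le_x le_last s_ne => A C U P le_x le_last _.
move: (U); rewrite cons_uniq cat_uniq => /andP[_ /and3P[_ /hasPn/(_ m (mem_head _ _)) m_A]].
case: C U P le_x le_last => [|y C] U P le_x le_last /andP[m_C _].
  have rA : A ++ [:: m] != [::] by rewrite cats1 -size_eq0 size_rcons.
  have m_in : m \notin behead (belast x (A ++ [:: m])) by rewrite cats1 belast_rcons.
  by case/orP: (path_fsetU_side rA m_in P) => /andP[? _]; [left|right].
have x_m : x != m by apply: contraTneq U => ->; rewrite cons_uniq mem_cat mem_head orbT.
have m_le_x : m <= x by apply: le_x; rewrite !inE mem_cat inE eqxx !orbT.
have m_le_last : m <= last y C.
  by have := le_last m; rewrite last_cat /= mem_cat inE eqxx orbT; apply.
rewrite -cat_rcons in P *; move: P; rewrite cat_path last_rcons => /andP[P1 P2].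
have rA : rcons A m != [::] by rewrite -size_eq0 size_rcons.
have m_in1 : m \notin behead (belast x (rcons A m)) by rewrite belast_rcons.
have m_in2 : m \notin behead (belast m (y :: C)) by apply: contra m_C => /mem_belast.
have yC : y :: C != [::] by [].
case/orP: (path_fsetU_side rA m_in1 P1) => /andP[Q1 /= /andP[x1 _]].
  case/orP: (path_fsetU_side yC m_in2 P2) => /andP[Q2 _].
    by left; rewrite cat_path last_rcons Q1 Q2.
  by move: x_m; rewrite eqn_leq (le_m x1) m_le_x.
case/orP: (path_fsetU_side yC m_in2 P2) => /andP[Q2 in2].
  have last_m : last y C = m.
    by apply/eqP; rewrite eqn_leq m_le_last andbT (le_m (allP in2 _ (mem_last m (y :: C)))).
  by move: m_C; rewrite -last_m mem_last.
by right; rewrite cat_path last_rcons Q1 Q2.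
Qed.

Lemma forbidden_fsetU p : forbidden (E1 `|` E2) p -> forbidden E1 p \/ forbidden E2 p.
Proof.
move=> fb; have [v1 [v2 [r [vk Ep]]]] := forbidden_shape fb; subst p.
move/forbiddenE: (fb) => [/andP[U P] _ le_v1 le_vk _].
have le_last : {in v2 :: rcons r vk, forall z, z <= last v1 (v2 :: rcons r vk)}.
  by rewrite /= last_rcons => z; rewrite -rcons_cons mem_rcons inE => /orP[/eqP->//|/le_vk].
by case: (path_fsetU_peaks U isT P le_v1 le_last) => Pi; [left|right]; exact: forbidden_path fb Pi.
Qed.

End PathInUnion.

Lemma face_edgeset t : adm_nodes t -> face (label t) (edgeset t).
Proof.
move=> adm; split; first exact: adm_edges.
elim: t adm => [X|X t1 IH1 t2 IH2] adm p /(forbidden_fsetD1 (adm_edges adm)) /=.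
  rewrite edgeset_leaf fsetDv => fb; have [v1 [v2 [r [vk Ep]]]] := forbidden_shape fb.
  by case: fb; rewrite Ep /is_path => /andP[_ /andP[]]; rewrite inE.
case/adm_nodeP: (adm) => _ sp adm1 adm2.
have sub : edgeset (Node X t1 t2) `\ (fmin X, fmax X) `<=` edgeset t1 `|` edgeset t2.
  by rewrite edgeset_node fsubDset.
move/(forbidden_subset sub).
case/(forbidden_fsetU (adm_edges adm1) (adm_edges adm2) (split_inter sp) (@leq_fmax _)).
  exact: IH1.
exact: IH2.
Qed.

(** * Injectivity *)

Lemma edgeset_connected t (P : pred nat) : adm_nodes t ->
  (forall e, e \in edgeset t -> e.2 != fmax (label t) -> P e.1 = P e.2) ->
  forall x, x \in label t -> x != fmax (label t) -> P x = P (fmin (label t)).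
Proof.
elim: t => [X /card2_fminmax X2|X t1 IH1 t2 IH2 /adm_nodeP[_ sp adm1 adm2]] /= P_edge x.
  by rewrite {1}X2 !inE => /orP[/eqP->|->].
have edge_node e : e \in edgeset t1 `|` edgeset t2 -> e \in edgeset (Node X t1 t2).
  by rewrite edgeset_node in_fset1U => ->; rewrite orbT.
have P_m : P (fmax (label t1)) = P (fmin X).
  have root1 := root_in_edgeset t1; rewrite (fmin_split1 sp) in root1.
  rewrite (P_edge (fmin X, fmax (label t1))) //; first by apply: edge_node; rewrite inE root1.
  by rewrite /= neq_ltn (fmax1_lt_fmax sp).
have P1 y : y \in label t1 -> P y = P (fmin X).
  have [->|y_m y1] := eqVneq y (fmax (label t1)); first by move=> _; exact: P_m.
  rewrite -(fmin_split1 sp) (IH1 adm1) // => e e1 e2_m.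
  have [_ _ e2] := adm_edges adm1 e1; apply: P_edge.
    by apply: edge_node; rewrite inE e1.
  by apply: contraNneq (split_fmax1 sp) => <-.
have P_edge2 e : e \in edgeset t2 -> e.2 != fmax (label t2) -> P e.1 = P e.2.
  by move=> e2; rewrite (fmax_split2 sp); apply/P_edge/edge_node; rewrite inE e2 orbT.
have P2 y : y \in label t2 -> y != fmax X -> P y = P (fmin X).
  have m_M : fmax (label t1) != fmax (label t2).
    by rewrite (fmax_split2 sp) neq_ltn (fmax1_lt_fmax sp).
  rewrite -(fmax_split2 sp) => y2 y_M.
  by rewrite (IH2 adm2 P_edge2 y y2 y_M) -(IH2 adm2 P_edge2 _ (fmax1_in2 sp) m_M).
by move=> /(split_cover sp)/orP[/P1 //|x2 x_M]; exact: P2.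
Qed.

Definition restr (F : {fset nat * nat}) (X : {fset nat}) : {fset nat * nat} :=
  [fset e in F | (e.1 \in X) && (e.2 \in X)].

Lemma in_restr F X e : (e \in restr F X) = [&& e \in F, e.1 \in X & e.2 \in X].
Proof. by rewrite !inE /= andbC. Qed.

Section SplitEdges.
Variables (X X1 X2 : {fset nat}) (E1 E2 : {fset nat * nat}).
Hypotheses (sp : splitting X X1 X2) (kv1 : edges_of_KV X1 E1) (kv2 : edges_of_KV X2 E2).
Let E := (fmin X, fmax X) |` (E1 `|` E2).

Lemma restr_split1 : restr E X1 = E1.
Proof.
apply/fsetP => e; rewrite in_restr in_fset1U in_fsetU.
apply/idP/idP => [/and3P[/or3P[/eqP->|//|/kv2[lt a2 b2]] a1 b1]|e1].
- by rewrite /= (negbTE (split_fmax1 sp)) in b1.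
- by move: lt; rewrite (split_inter sp a1 a2) (split_inter sp b1 b2) ltnn.
- by have [_ -> ->] := kv1 e1; rewrite e1 orbT.
Qed.

Lemma restr_split2 : restr E X2 = E2.
Proof.
apply/fsetP => e; rewrite in_restr in_fset1U in_fsetU.
apply/idP/idP => [/and3P[/or3P[/eqP->|/kv1[lt a1 b1]|//] a2 b2]|e2].
- by rewrite /= (negbTE (split_fmin2 sp)) in a2.
- by move: lt; rewrite (split_inter sp a1 a2) (split_inter sp b1 b2) ltnn.
- by have [_ -> ->] := kv2 e2; rewrite e2 !orbT.
Qed.

Lemma split_edge_fmin u : (fmin X, u) \in E -> u != fmax X -> u \in X1.
Proof.
rewrite in_fset1U in_fsetU => /or3P[/eqP[->]|/kv1[]//|/kv2[_ a2 _]] u_M.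
  by rewrite eqxx in u_M.
by rewrite /= (negbTE (split_fmin2 sp)) in a2.
Qed.

End SplitEdges.

Section SameEdgeset.
Variables (X : {fset nat}) (A1 A2 B1 B2 : btree).
Hypotheses (admA : adm_nodes (Node X A1 A2)) (admB : adm_nodes (Node X B1 B2)).
Hypothesis sameE : edgeset (Node X A1 A2) = edgeset (Node X B1 B2).

Lemma fmax_child1_le : fmax (label A1) <= fmax (label B1).
Proof.
case/adm_nodeP: admA => _ spA _ _; case/adm_nodeP: admB => _ spB admB1 admB2.
apply/leq_fmax/(split_edge_fmin spB (adm_edges admB1) (adm_edges admB2)).
  rewrite -edgeset_node -sameE edgeset_node in_fset1U in_fsetU.
  by rewrite -(fmin_split1 spA) root_in_edgeset orbT.
by rewrite neq_ltn (fmax1_lt_fmax spA).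
Qed.

Lemma label_child1_sub : fmax (label A1) = fmax (label B1) -> label A1 `<=` label B1.
Proof.
move=> same_m; case/adm_nodeP: admA => _ spA admA1 _.
case/adm_nodeP: admB => _ spB admB1 admB2.
have P_edge e : e \in edgeset A1 -> e.2 != fmax (label A1) ->
    (e.1 \in label B1) = (e.2 \in label B1).
  move=> eA e2_m; have [lt a1 b1] := adm_edges admA1 eA.
  have : e \in edgeset (Node X B1 B2) by rewrite -sameE edgeset_node !inE eA orbT.
  rewrite edgeset_node in_fset1U in_fsetU => /or3P[/eqP e_root|eB1|eB2].
  - by move: b1 (split_fmax1 spA); rewrite e_root => ->.
  - by have [_ -> ->] := adm_edges admB1 eB1.
  - have [_ a2 b2] := adm_edges admB2 eB2.
    have b1N : e.2 \notin label B1.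
      by apply: contra e2_m => /(split_inter spB)/(_ b2)->; rewrite same_m.
    apply/idP/idP => [e1_B1|]; last by rewrite (negbTE b1N).
    by move: lt; rewrite (split_inter spB e1_B1 a2) -same_m ltnNge leq_fmax.
apply/fsubsetP => x x1; have [->|x_m] := eqVneq x (fmax (label A1)).
  by rewrite same_m (fmax1_in1 spB).
have := @edgeset_connected A1 [in label B1] admA1 P_edge x x1 x_m.
by rewrite /= (fmin_split1 spA) (split_fmin1 spB).
Qed.

End SameEdgeset.

Lemma edgeset_inj t1 t2 : adm_nodes t1 -> adm_nodes t2 -> label t1 = label t2 ->
  edgeset t1 = edgeset t2 -> t1 = t2.
Proof.
elim: t1 t2 => [X|X A1 IH1 A2 IH2] [Y|Y B1 B2] /= admA admB sameX; subst Y => //.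
- by move/adm_nodeP: admB => [+ _]; rewrite admA.
- by move/adm_nodeP: admA => [+ _]; rewrite admB.
move=> sameE; case/adm_nodeP: (admA) => _ spA admA1 admA2.
case/adm_nodeP: (admB) => _ spB admB1 admB2.
have same_m : fmax (label A1) = fmax (label B1).
  apply/eqP; rewrite eqn_leq (fmax_child1_le admA admB sameE).
  by rewrite (fmax_child1_le admB admA (esym sameE)).
have same1 : label A1 = label B1.
  apply/eqP; rewrite eqEfsubset (label_child1_sub admA admB sameE same_m).
  by rewrite (label_child1_sub admB admA (esym sameE) (esym same_m)).
have same2 : label A2 = label B2 by rewrite (split_label2 spA) (split_label2 spB) same1.
have kvA1 := adm_edges admA1; have kvA2 := adm_edges admA2.
have kvB1 := adm_edges admB1; have kvB2 := adm_edges admB2.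
have sameE1 : edgeset A1 = edgeset B1.
  rewrite -(restr_split1 spA kvA1 kvA2) -(restr_split1 spB kvB1 kvB2).
  by rewrite -!edgeset_node sameE same1.
have sameE2 : edgeset A2 = edgeset B2.
  rewrite -(restr_split2 spA kvA1 kvA2) -(restr_split2 spB kvB1 kvB2).
  by rewrite -!edgeset_node sameE same2.
by rewrite (IH1 B1 admA1 admB1 same1 sameE1) (IH2 B2 admA2 admB2 same2 sameE2).
Qed.

(** * Decomposition of faces *)

Definition min_nbrs (V : {fset nat}) (G : {fset nat * nat}) : {fset nat} :=
  [fset x in V | ((fmin V, x) \in G) && (x != fmax V)].

(* Any vertex strictly between min V and max V serves when min V has no other neighbour. *)
Definition pivot V G (c : nat) : nat :=
  if min_nbrs V G == fset0 then c else fmax (min_nbrs V G).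

Definition joined_below (G : {fset nat * nat}) (m w a : nat) : Prop :=
  exists q, [/\ path (adj G) w q, last w q = a & all (fun z => z < m) (w :: q)].

Definition low_part V G c : {fset nat} :=
  [fset w in V | `[< joined_below G (pivot V G c) w (fmin V) >]].

Section FaceSplit.
Variables (V : {fset nat}) (G : {fset nat * nat}) (c : nat).
Hypotheses (fG : face V G) (cV : c \in V) (a_c : fmin V < c) (c_b : c < fmax V).

Local Notation a := (fmin V).
Local Notation b := (fmax V).
Local Notation N := (min_nbrs V G).
Local Notation m := (pivot V G c).
Local Notation R := (low_part V G c).

Let kvG : edges_of_KV V G := fG.1.

Lemma in_min_nbrs x : (x \in N) = [&& x \in V, (a, x) \in G & x != b].
Proof. by rewrite !inE /= andbC. Qed.

Lemma leq_pivot x : x \in N -> x <= m.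
Proof. by rewrite /pivot; case: eqP => [->|_]; [rewrite inE|exact: leq_fmax]. Qed.

Lemma pivot_nbr : N != fset0 -> m \in N.
Proof. by move=> N0; rewrite /pivot (negbTE N0); have [x /fmax_mem] := fset0Pn _ N0. Qed.

Lemma pivot_cases : (N = fset0 /\ m = c) \/ m \in N.
Proof. by have [N0|/pivot_nbr] := eqVneq N fset0; [left; rewrite /pivot N0 eqxx|right]. Qed.

Lemma pivot_mem : m \in V.
Proof. by case: pivot_cases => [[_ ->]|]; rewrite ?in_min_nbrs => // /and3P[]. Qed.

Lemma fmin_lt_pivot : a < m.
Proof.
case: pivot_cases => [[_ ->]//|]; rewrite in_min_nbrs => /and3P[_ /kvG[] //].
Qed.

Lemma pivot_lt_fmax : m < b.
Proof.
case: pivot_cases => [[_ ->]//|]; rewrite in_min_nbrs => /and3P[mV _ m_b].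
by rewrite ltn_neqAle m_b leq_fmax.
Qed.

Lemma in_low_part w : (w \in R) = (w \in V) && `[< joined_below G m w a >].
Proof. by rewrite !inE /= andbC. Qed.

Lemma fmin_low : a \in R.
Proof.
rewrite in_low_part (fmin_mem cV); apply/asboolP; exists [::]; split=> //=.
by rewrite fmin_lt_pivot.
Qed.

Lemma low_lt_pivot w : w \in R -> w < m.
Proof. by rewrite in_low_part => /andP[_ /asboolP[q [_ _ /andP[]]]]. Qed.

Lemma low_sub : {subset R <= V}.
Proof. by move=> w; rewrite in_low_part => /andP[]. Qed.

Lemma low_joined w : w \in R -> joined_below G m w a.
Proof. by rewrite in_low_part => /andP[_ /asboolP]. Qed.

Lemma pivot_adj w : w \in R -> w != a -> adj G a m.
Proof.
move=> /low_joined[q [P last_a below_m]] w_a.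
case/lastP: q P last_a below_m => [/= _ /eqP|q z]; first by rewrite (negbTE w_a).
rewrite rcons_path last_rcons => /andP[_ yz] za below_m; subst z; set y := last w q.
have y_m : y < m.
  by apply: (allP below_m); rewrite -rcons_cons mem_rcons inE mem_last orbT.
have [yV _] := adj_edges kvG yz.
have yN : y \in N.
  rewrite in_min_nbrs yV /= neq_ltn (ltn_trans y_m pivot_lt_fmax) andbT.
  by move: yz; rewrite adjC /adj edge_of_le // geq_fmin.
have N0 : N != fset0 by apply/fset0Pn; exists y.
have := pivot_nbr N0; rewrite in_min_nbrs => /and3P[_ am _].
by rewrite /adj edge_of_le // ltnW // fmin_lt_pivot.
Qed.

Lemma low_nbr_le_pivot w u : w \in R -> w != a -> adj G w u -> u <= m.
Proof.
move=> wR w_a wu; rewrite leqNgt; apply/negP => m_u.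
have am := pivot_adj wR w_a; have wV := low_sub wR.
have [q [P last_a below_m]] := low_joined wR.
case: (shortenP P) last_a => r Pr Ur sub_r last_a.
have below_r : all (fun z => z < m) (w :: r).
  by apply/allP => z; rewrite inE => /orP[/eqP->|/sub_r zq]; apply: (allP below_m); rewrite inE ?eqxx ?zq ?orbT.
have le_m z : z \in w :: rcons r m -> z <= m.
  by rewrite -rcons_cons mem_rcons inE => /orP[/eqP->//|/(allP below_r)/ltnW].
apply: (fG.2 (u :: w :: rcons r m)); apply/forbiddenE; split.
- rewrite /is_path cons_uniq -rcons_cons rcons_uniq Ur andbT.
  have pth : path (adj G) u (rcons (w :: r) m).
    by rewrite rcons_cons /= adjC wu rcons_path Pr last_a am.
  apply/andP; split; last exact: pth.
  apply/andP; split.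
    by apply/negP => /le_m; rewrite leqNgt m_u.
  by apply/negP => /(allP below_r); rewrite ltnn.
- by apply: contra w_a => /eqP r0; rewrite -last_a r0.
- by move=> z; rewrite inE => /orP[/eqP->//|/le_m/leq_trans->//]; exact: ltnW.
- by move=> z /(allP below_r)/ltnW.
- by rewrite last_a ltn_neqAle eq_sym w_a geq_fmin.
Qed.

Lemma low_closed w u : w \in R -> adj G w u -> u != m -> (u \in R) || ((w == a) && (u == b)).
Proof.
move=> wR wu u_m; have [_ uV] := adj_edges kvG wu.
have [u_lt_m|m_le_u] := ltnP u m.
  have [q [P last_a below_m]] := low_joined wR.
  rewrite in_low_part uV; apply/orP; left; apply/asboolP; exists (w :: q).
  by rewrite /= adjC wu P u_lt_m.
have m_lt_u : m < u by rewrite ltn_neqAle eq_sym u_m m_le_u.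
have [w_a|w_a] := eqVneq w a; last by rewrite ltnNge (low_nbr_le_pivot wR w_a wu) in m_lt_u.
apply/orP; right; apply: contraTT m_lt_u => u_b.
rewrite -leqNgt leq_pivot // in_min_nbrs uV u_b andbT.
by move: wu; rewrite w_a /adj edge_of_le // geq_fmin.
Qed.

Lemma split_low : splitting V (m |` R) (V `\` R).
Proof.
have fmax1 : fmax (m |` R) = m.
  apply: fmax_eq => [|x]; first by rewrite fset1U1.
  by rewrite in_fset1U => /orP[/eqP->//|/low_lt_pivot/ltnW].
have m_R : m \notin R by apply/negP => /low_lt_pivot; rewrite ltnn.
have b_R : b \notin R.
  by apply/negP => /low_lt_pivot; rewrite ltnNge ltnW // pivot_lt_fmax.
constructor.
- by rewrite in_fset1U fmin_low orbT.
- by rewrite in_fsetD fmin_low.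
- by rewrite in_fsetD b_R (fmax_mem cV).
- by rewrite in_fset1U (negbTE b_R) orbF neq_ltn pivot_lt_fmax orbT.
- apply/fsetP => x; rewrite in_fsetU in_fset1U in_fsetD.
  apply/idP/idP => [/orP[/orP[/eqP->|/low_sub]|/andP[]] //|xV]; first exact: pivot_mem.
  by rewrite xV andbT; case: (x \in R); rewrite ?orbT.
- apply/fsetP => x; rewrite fmax1 in_fsetI in_fset1U in_fsetD in_fset1.
  apply/idP/idP => [/andP[/orP[//|xR] /andP[]]|/eqP->]; first by rewrite xR.
  by rewrite eqxx m_R pivot_mem.
Qed.

Lemma edges_low_split : G `<=` (a, b) |` (restr G (m |` R) `|` restr G (V `\` R)).
Proof.
apply/fsubsetP => -[x y] eG; have [/= lt xV yV] := kvG eG.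
rewrite in_fset1U in_fsetU !in_restr eG /= !in_fset1U !in_fsetD xV yV.
have xy : adj G x y by rewrite /adj edge_of_le // ltnW.
case: (boolP (x \in R)) => x_R.
  have [->|y_m] := eqVneq y m; first by rewrite !orbT.
  case/orP: (low_closed x_R xy y_m) => [->|/andP[/eqP-> /eqP->]]; first by rewrite !orbT.
  by rewrite eqxx.
case: (boolP (y \in R)) => y_R; last by rewrite !orbT.
have x_m : x != m by rewrite neq_ltn (ltn_trans lt (low_lt_pivot y_R)).
case/orP: (low_closed y_R (etrans (adjC _ _ _) xy) x_m) => [xR|/andP[y_a _]].
  by rewrite xR in x_R.
by move: lt; rewrite (eqP y_a) ltnNge geq_fmin.
Qed.

End FaceSplit.

Lemma face_split V G : face V G -> 2 < #|` V| ->
  exists X1 X2, splitting V X1 X2 /\ G `<=` (fmin V, fmax V) |` (restr G X1 `|` restr G X2).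
Proof.
move=> fG V_gt2.
have [c cV /andP[a_c c_b]] : exists2 c, c \in V & fmin V < c < fmax V.
  case: (boolP (V `<=` [fset fmin V; fmax V])) => [sub|/fsubsetPn[c cV]].
    by have := fsubset_leq_card sub; rewrite cardfs2; case: (_ != _); lia.
  rewrite !inE negb_or => /andP[c_a c_b]; exists c => //.
  by rewrite ltn_neqAle eq_sym c_a geq_fmin //= ltn_neqAle c_b leq_fmax.
exists (pivot V G c |` low_part V G c), (V `\` low_part V G c).
by split; [exact: split_low|exact: edges_low_split].
Qed.

Lemma face_restr V W G : face V G -> face W (restr G W).
Proof.
have sub : restr G W `<=` G by apply/fsubsetP => e; rewrite in_restr => /andP[].
move=> [kv noforb]; split=> [e|p /(forbidden_subset sub)/noforb //].
by rewrite in_restr => /and3P[/kv[]].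
Qed.

Lemma card2_edges V G : #|` V| = 2 -> edges_of_KV V G -> G `<=` edgeset (Leaf V).
Proof.
move=> V2 kv; apply/fsubsetP => -[x y] /kv[/= lt /(card2_mem V2) xV /(card2_mem V2) yV].
rewrite edgeset_leaf inE; have := fmin_lt_fmax (eq_leq (esym V2)).
case/orP: xV yV lt => /eqP-> /orP[]/eqP->; rewrite ?ltnn ?eqxx // => lt1 lt2.
by have := ltn_trans lt1 lt2; rewrite ltnn.
Qed.

Lemma face_extends V G : 2 <= #|` V| -> face V G ->
  exists T, [/\ label T = V, adm_nodes T & G `<=` edgeset T].
Proof.
have [n] := ubnP #|` V|; elim: n V G => // n IH V G V_lt V_ge2 fG.
have [V2|V_neq2] := eqVneq #|` V| 2.
  by exists (Leaf V); split=> //; exact: card2_edges fG.1.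
have V_gt2 : 2 < #|` V| by rewrite ltn_neqAle eq_sym V_neq2 V_ge2.
have [X1 [X2 [sp sub]]] := face_split fG V_gt2.
have /andP[X1_ge2 X1_lt] := split_card1 sp; have /andP[X2_ge2 X2_lt] := split_card2 sp.
have [T1 [lab1 adm1 sub1]] := IH _ _ (leq_trans X1_lt V_lt) X1_ge2 (face_restr X1 fG).
have [T2 [lab2 adm2 sub2]] := IH _ _ (leq_trans X2_lt V_lt) X2_ge2 (face_restr X2 fG).
subst X1 X2; exists (Node V T1 T2); split=> //; first by apply/adm_nodeP; split.
by rewrite edgeset_node; apply: fsubset_trans sub _; rewrite fsetUS // fsetUSS.
Qed.

Lemma facet_edgeset t : adm_nodes t -> facet (label t) (edgeset t).
Proof.
move=> adm; split=> [|G fG sub]; first exact: face_edgeset.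
have [t' [same_label adm' sub']] := face_extends (adm_card adm) fG.
apply/eqP; rewrite eq_sym eqEfcard sub (card_edgeset adm) -same_label -(card_edgeset adm').
exact: fsubset_leq_card.
Qed.

Theorem theorem6p4 (V : {fset nat}) (hV : 2 <= #|` V|) :
  [/\ (forall T, admissible V T -> facet V (edgeset T)),
      (forall T1 T2, admissible V T1 -> admissible V T2 ->
                     edgeset T1 = edgeset T2 -> T1 = T2) &
      (forall F, facet V F -> exists T, admissible V T /\ edgeset T = F)].
Proof.
split.
- by move=> T /admissibleE[<-]; exact: facet_edgeset.
- move=> T1 T2 /admissibleE[lab1 adm1] /admissibleE[lab2 adm2].
  by apply: edgeset_inj; rewrite // lab1 lab2.
- move=> F [fF maxF]; have [T [lab adm sub]] := face_extends hV fF.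
  exists T; split; first exact/admissibleE.
  by apply: maxF sub; rewrite -lab; exact: face_edgeset.
Qed.
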